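(* There exists $M>0$ such that $$\inf_{\lambda\ge M,\ \beta>0}\left[\rho\,\phi(a)+\gamma\,\Phi(a)+\frac{2\gamma\,\phi(a)}{3\sqrt{n}}+\frac{\gamma}{12n-1}\right]>0,$$ where $n,\rho,a,\gamma$ are the functions of $(\beta,\lambda)$ defined in the context.
   Context: $\phi$ and $\Phi$ denote the standard normal density and distribution function. For $\lambda>0$ and $\beta\ge 0$ set $n=\lambda+\beta\sqrt{\lambda}$, $\rho=\lambda/n$, $a=\sqrt{-2n(1-\rho+\ln\rho)}$ (note $1-\rho+\ln\rho\le 0$), and $\gamma=(n-\lambda)/\sqrt{n}=\beta\sqrt{\rho}$. *)

From Stdlib Require Import Reals Lra.
Open Scope R_scope.

Definition phi (x : R) : R := exp (- (x ^ 2) / 2) / sqrt (2 * PI).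

Lemma phi_continuity : continuity phi.
Proof.
  unfold phi. intro x. apply continuity_pt_div.
  - apply continuity_pt_comp with (f1 := fun x => - x ^ 2 / 2) (f2 := exp).
    + reg.
    + apply derivable_continuous_pt, derivable_pt_exp.
  - apply continuity_pt_const. intros ? ?; reflexivity.
  - apply Rgt_not_eq, sqrt_lt_R0. pose proof PI_RGT_0; lra.
Qed.

Lemma phi_integrable (a b : R) : Riemann_integrable phi a b.
Proof.
  destruct (Rle_dec a b) as [H|H].
  - apply continuity_implies_RiemannInt; [exact H|]. intros; apply phi_continuity.
  - apply RiemannInt_P1, continuity_implies_RiemannInt; [lra|].
    intros; apply phi_continuity.
Qed.

(* standard normal distribution function:
   Phi x = int_{-oo}^x phi = 1/2 + int_0^x phi (oriented Riemann integral) *)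
Definition Phi (x : R) : R := / 2 + RiemannInt (phi_integrable 0 x).

Definition nn (lambda beta : R) : R := lambda + beta * sqrt lambda.
Definition rho (lambda beta : R) : R := lambda / nn lambda beta.
Definition aa (lambda beta : R) : R :=
  sqrt (- 2 * nn lambda beta * (1 - rho lambda beta + ln (rho lambda beta))).
Definition gam (lambda beta : R) : R := (nn lambda beta - lambda) / sqrt (nn lambda beta).

Definition target (lambda beta : R) : R :=
  let n := nn lambda beta in
  let r := rho lambda beta in
  let a := aa lambda beta in
  let g := gam lambda beta in
  r * phi a + g * Phi a + 2 * g * phi a / (3 * sqrt n) + g / (12 * n - 1).

(* Since Phi a >= 1/2 and the last two summands are nonnegative, the target is at least
   rho phi(a) + gamma/2. For beta <= 1 we have rho >= 1/2 and a <= sqrt 2 beta <= sqrt 2, so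
   the first term is at least phi(sqrt 2)/2; for beta >= 1 we have gamma = beta sqrt rho >= 1/2. *)
From Stdlib Require Import Reals Lra.
Open Scope R_scope.

Lemma ln_le_sub_one x : 0 < x -> ln x <= x - 1.
Proof. intro Hx. pose proof (exp_ineq1_le (ln x)). rewrite exp_ln in *; lra. Qed.

Lemma one_sub_inv_le_ln x : 0 < x -> 1 - / x <= ln x.
Proof.
  intro Hx. pose proof (ln_le_sub_one (/ x) (Rinv_0_lt_compat x Hx)).
  rewrite ln_Rinv in *; lra.
Qed.

Lemma exp_le_exp_of_le x y : x <= y -> exp x <= exp y.
Proof. intros [Hlt | ->]; [left; apply exp_increasing|]; lra. Qed.

Lemma sqrt_2PI_ge_2 : 2 <= sqrt (2 * PI).
Proof.
  rewrite <- (sqrt_square 2) at 1 by lra. apply sqrt_le_1_alt.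
  pose proof PI2_1. lra.
Qed.

Lemma sqrt_2PI_pos : 0 < sqrt (2 * PI).
Proof. pose proof sqrt_2PI_ge_2; lra. Qed.

Lemma phi_pos x : 0 < phi x.
Proof. apply Rdiv_lt_0_compat; [apply exp_pos | apply sqrt_2PI_pos]. Qed.

Lemma phi_antitone x y : 0 <= x <= y -> phi y <= phi x.
Proof.
  intros Hxy. unfold phi, Rdiv.
  apply Rmult_le_compat_r; [left; apply Rinv_0_lt_compat, sqrt_2PI_pos|].
  apply exp_le_exp_of_le. simpl. nra.
Qed.

Lemma phi0_le_half : phi 0 <= / 2.
Proof.
  unfold phi. replace (- 0 ^ 2 / 2) with 0 by (simpl; field). rewrite exp_0.
  pose proof sqrt_2PI_ge_2. unfold Rdiv. rewrite Rmult_1_l.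
  apply Rinv_le_contravar; lra.
Qed.

Lemma Phi_ge_half a : 0 <= a -> / 2 <= Phi a.
Proof.
  intro Ha. unfold Phi.
  assert (Hint := RiemannInt_const_bound (l := 0) (u := phi 0) (phi_integrable 0 a) Ha).
  enough (0 * (a - 0) <= RiemannInt (phi_integrable 0 a)) by lra.
  apply Hint. intros x Hx. split; [left; apply phi_pos | apply phi_antitone; lra].
Qed.

Section Quantities.

Variables lambda beta : R.
Hypothesis lambda_pos : 0 < lambda.
Hypothesis beta_pos : 0 < beta.

Lemma nn_sub : nn lambda beta - lambda = beta * sqrt lambda.
Proof. unfold nn; ring. Qed.

Lemma sqrt_lambda_pos : 0 < sqrt lambda.
Proof. apply sqrt_lt_R0; lra. Qed.

Lemma nn_gt_lambda : lambda < nn lambda beta.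
Proof. pose proof nn_sub. pose proof sqrt_lambda_pos. nra. Qed.

Lemma nn_pos : 0 < nn lambda beta.
Proof. pose proof nn_gt_lambda; lra. Qed.

Lemma rho_pos : 0 < rho lambda beta.
Proof. apply Rdiv_lt_0_compat; [lra | apply nn_pos]. Qed.

Lemma gam_eq : gam lambda beta = beta * sqrt (rho lambda beta).
Proof.
  pose proof nn_pos. unfold gam, rho.
  rewrite nn_sub, sqrt_div_alt by lra. field. apply Rgt_not_eq, sqrt_lt_R0; lra.
Qed.

Lemma gam_pos : 0 < gam lambda beta.
Proof.
  rewrite gam_eq. apply Rmult_lt_0_compat; [lra | apply sqrt_lt_R0, rho_pos].
Qed.

Lemma aa_le : aa lambda beta <= sqrt 2 * beta.
Proof.
  pose proof nn_pos as Hn. pose proof rho_pos as Hr.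
  replace (sqrt 2 * beta) with (sqrt (2 * (beta * beta)))
    by (rewrite sqrt_mult_alt, sqrt_square; lra).
  apply sqrt_le_1_alt.
  assert (Hln := one_sub_inv_le_ln _ Hr).
  assert (Hsq : nn lambda beta * (rho lambda beta + / rho lambda beta - 2) = beta * beta).
  { pose proof sqrt_lambda_pos. unfold rho, nn.
    set (s := sqrt lambda) in *.
    replace lambda with (s * s) by (apply sqrt_sqrt; lra). field. split; nra. }
  assert (nn lambda beta * (1 - / rho lambda beta) <= nn lambda beta * ln (rho lambda beta))
    by (apply Rmult_le_compat_l; lra).
  rewrite <- Hsq. lra.
Qed.

End Quantities.

Lemma rho_ge lambda beta : 1 <= lambda -> 0 < beta -> / (1 + beta) <= rho lambda beta.
Proof.
  intros Hl Hb.
  assert (Hs : sqrt lambda <= lambda).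
  { pose proof (sqrt_le_1_alt 1 lambda Hl) as Hs1. rewrite sqrt_1 in Hs1.
    pose proof (sqrt_sqrt lambda ltac:(lra)). nra. }
  assert (Hn : nn lambda beta <= lambda * (1 + beta)) by (unfold nn; nra).
  replace (/ (1 + beta)) with (lambda / (lambda * (1 + beta))) by (field; lra).
  unfold rho, Rdiv. apply Rmult_le_compat_l; [lra|].
  apply Rinv_le_contravar; [apply nn_pos|]; lra.
Qed.

Lemma gam_ge_half lambda beta : 1 <= lambda -> 1 <= beta -> / 2 <= gam lambda beta.
Proof.
  intros Hl Hb. rewrite gam_eq by lra.
  assert (Hr := rho_ge lambda beta Hl ltac:(lra)).
  assert (Hrr : sqrt (rho lambda beta) * sqrt (rho lambda beta) = rho lambda beta)
    by (apply sqrt_sqrt; left; apply rho_pos; lra).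
  assert (Hquarter : / 4 <= beta * beta * / (1 + beta)).
  { apply Rmult_le_reg_r with (1 + beta); [lra|].
    rewrite Rmult_assoc, Rinv_l by lra. nra. }
  assert (/ 4 <= beta * beta * rho lambda beta).
  { apply Rle_trans with (1 := Hquarter). apply Rmult_le_compat_l; nra. }
  assert (Hsq : beta * sqrt (rho lambda beta) * (beta * sqrt (rho lambda beta))
                = beta * beta * rho lambda beta)
    by (rewrite <- Hrr at 3; ring).
  set (y := beta * sqrt (rho lambda beta)) in *.
  assert (0 <= y) by (pose proof (sqrt_pos (rho lambda beta)); unfold y; nra).
  destruct (Rlt_le_dec y (/ 2)) as [Hy | Hy]; [|exact Hy].
  assert (y * y < / 2 * / 2) by (apply Rmult_le_0_lt_compat; lra).
  lra.
Qed.

Lemma target_ge lambda beta : 1 <= lambda -> 0 < beta ->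
  rho lambda beta * phi (aa lambda beta) + gam lambda beta / 2 <= target lambda beta.
Proof.
  intros Hl Hb. assert (Hl0 : 0 < lambda) by lra.
  pose proof (nn_gt_lambda lambda beta Hl0 Hb).
  pose proof (nn_pos lambda beta Hl0 Hb) as Hn. pose proof (phi_pos (aa lambda beta)) as Hphi.
  pose proof (gam_pos lambda beta Hl0 Hb) as Hg.
  assert (HPhi : gam lambda beta / 2 <= gam lambda beta * Phi (aa lambda beta)).
  { pose proof (Phi_ge_half (aa lambda beta) (sqrt_pos _)). nra. }
  assert (0 <= 2 * gam lambda beta * phi (aa lambda beta) / (3 * sqrt (nn lambda beta))).
  { apply Rmult_le_pos; [nra|]. left; apply Rinv_0_lt_compat.
    pose proof (sqrt_lt_R0 _ Hn); lra. }
  assert (0 <= gam lambda beta / (12 * nn lambda beta - 1)).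
  { apply Rmult_le_pos; [lra|]. left; apply Rinv_0_lt_compat. lra. }
  unfold target. lra.
Qed.

Theorem lemma4 :
  exists M : R, 0 < M /\
    exists c : R, 0 < c /\
      forall lambda beta : R, M <= lambda -> 0 < beta -> c <= target lambda beta.
Proof.
  exists 1. split; [lra|].
  exists (phi (sqrt 2) / 2). split; [pose proof (phi_pos (sqrt 2)); lra|].
  intros lambda beta Hl Hb.
  assert (Htarget := target_ge lambda beta Hl Hb).
  assert (Hphi_pos := phi_pos (aa lambda beta)).
  destruct (Rle_lt_dec beta 1) as [Hb1 | Hb1].
  - assert (Hr : / 2 <= rho lambda beta).
    { apply Rle_trans with (/ (1 + beta)); [apply Rinv_le_contravar; lra|].
      apply rho_ge; lra. }
    assert (Hphi : phi (sqrt 2) <= phi (aa lambda beta)).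
    { pose proof (aa_le lambda beta ltac:(lra) Hb). pose proof (sqrt_lt_R0 2 ltac:(lra)).
      apply phi_antitone. split; [apply sqrt_pos | nra]. }
    pose proof (gam_pos lambda beta ltac:(lra) Hb).
    nra.
  - assert (Hphi2 : phi (sqrt 2) <= / 2).
    { pose proof (phi_antitone 0 (sqrt 2) (conj (Rle_refl 0) (sqrt_pos 2))).
      pose proof phi0_le_half. lra. }
    assert (Hg := gam_ge_half lambda beta Hl ltac:(lra)).
    pose proof (rho_pos lambda beta ltac:(lra) Hb). nra.
Qed.
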